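(* Let $n\ge1$, let $\mathbf{k}=(k_1,\dots,k_n)$ be positive integers and $N=n+|\mathbf{k}|$. The Filling Algorithm, $D\mapsto T(D)$, defines a bijection from $\mathcal{D}_{\mathbf{k}}$ onto $\mathcal{T}_{\mathbf{k}}$.
   Context: $|\mathbf{k}|=k_1+\cdots+k_n$. $\mathcal{D}_{\mathbf{k}}$ is the set of sequences $D=(a_1,\dots,a_N)$ whose positive entries are $k_1,\dots,k_n$ in this order, whose other $|\mathbf{k}|$ entries equal $-1$, and all of whose partial sums $a_1+\cdots+a_{i-1}$ are $\ge0$. Its SW-word $\texttt{SW}(D)=\sigma_1\cdots\sigma_N$ has $\sigma_i=S^{k_j}$ if $a_i=k_j$ and $\sigma_i=W$ if $a_i=-1$. $\mathcal{T}_{\mathbf{k}}$ is the set of arrays with $n$ columns, column $i$ consisting of $k_i+1$ cells in rows $1,\dots,k_i+1$, filled with the numbers $1,\dots,N$ each exactly once, such that entries increase from top to bottom in each column, increase from left to right along each row (among the cells present), and such that for every pair of entries $a<d$ with $d$ directly below $a$, no two entries $b,c$ with $a<b<c<d$ lie in the same column. Filling Algorithm (input $\texttt{SW}(D)$, output $T(D)$): place $1$ at the top of column $1$. Having placed $1,\dots,i-1$, call the bottom-most currently filled entry of column $j$ active if it is not in row $k_j+1$. If the $i$-th letter of $\texttt{SW}(D)$ is $W$, place $i$ immediately below the smallest active entry; otherwise place $i$ at the top of the first (leftmost) empty column. Continue until $1,\dots,N$ are placed. *)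

From mathcomp Require Import all_boot all_order all_algebra.
Set Implicit Arguments. Unset Strict Implicit. Unset Printing Implicit Defensive.
Import Order.TTheory GRing.Theory Num.Theory.

Definition bigN (k : seq nat) : nat := size k + sumn k.

Definition is_dyck (k : seq nat) (D : seq int) : Prop :=
  [/\ size D = bigN k,
      [seq x <- D | (0 < x)%R] = map Posz k,
      all (fun x : int => (0 < x)%R || (x == (-1)%R)) D
    & forall i, i < bigN k -> (0 <= \sum_(x <- take i D) x)%R ].

Inductive letter := LS of nat (* S^m *) | LW .

Definition SW (D : seq int) : seq letter :=
  map (fun a : int => if (0 < a)%R then LS `|a|%N else LW) D.

(* A partial filling: seq of n columns, each listed top to bottom. *)
Definition col (T : seq (seq nat)) (j : nat) : seq nat := nth [::] T j.
Definition bottom (c : seq nat) : nat := last 0 c.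

Definition active (k : seq nat) (T : seq (seq nat)) (j : nat) : bool :=
  (0 < size (col T j)) && (size (col T j) < (nth 0 k j).+1).

Definition step (k : seq nat) (i : nat) (l : letter) (T : seq (seq nat))
  : seq (seq nat) :=
  match l with
  | LW =>
      let js := [seq j <- iota 0 (size k) | active k T j] in
      match js with
      | [::] => T (* never happens on valid input *)
      | j0 :: _ =>
          let j := foldl (fun b j => if bottom (col T j) < bottom (col T b)
                                     then j else b) j0 js in
          set_nth [::] T j (rcons (col T j) i)
      end
  | LS _ =>
      let j := find (fun c : seq nat => c == [::]) T in
      if j < size T then set_nth [::] T j [:: i] else T
  end.

Fixpoint fill_from (k : seq nat) (i : nat) (w : seq letter) (T : seq (seq nat))
  : seq (seq nat) :=
  match w with
  | [::] => T
  | l :: w' => fill_from k i.+1 w' (step k i l T)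
  end.

(* Place 1 at the top of column 1, then letters 2..N of SW(D). *)
Definition fill_init (k : seq nat) : seq (seq nat) :=
  set_nth [::] (nseq (size k) [::]) 0 [:: 1].

Definition fillT (k : seq nat) (D : seq int) : seq (seq nat) :=
  fill_from k 2 (behead (SW D)) (fill_init k).

Definition is_tab (k : seq nat) (T : seq (seq nat)) : Prop :=
  [/\ size T = size k,
      forall j, j < size k -> size (col T j) = (nth 0 k j).+1,
      perm_eq (flatten T) (iota 1 (bigN k))
    & [/\
      forall j, j < size k -> sorted ltn (col T j),
      forall i j r, i < j -> j < size k -> r < size (col T i) ->
        r < size (col T j) -> nth 0 (col T i) r < nth 0 (col T j) r
    & (* a = entry, d directly below a: no b, c in a common column
         with a < b < c < d *)
      forall j r, j < size k -> r.+1 < size (col T j) ->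
        forall j' r1 r2, j' < size k -> r1 < size (col T j') ->
          r2 < size (col T j') ->
          ~ [/\ nth 0 (col T j) r < nth 0 (col T j') r1,
                nth 0 (col T j') r1 < nth 0 (col T j') r2
              & nth 0 (col T j') r2 < nth 0 (col T j) r.+1] ] ].

(* Run the Filling Algorithm on D and follow the partial filling after t letters.  Its
   columns and rows increase and it avoids the forbidden pattern; moreover no column
   contains b < c both larger than an active bottom a, because a later receives directly
   below it an entry larger than b and c.  The number of empty cells left in the started
   columns equals the height a_1 + ... + a_t, so every W-letter finds an active entry and
   at t = N all columns are full.  The column tops are exactly the positions of the
   S-letters, and these determine D, whence injectivity.  Conversely, for a tableau T put
   the S-letters of D at the column tops; then the filling after m letters is the part of
   T with entries <= m.  If m+1 is not a top, let b be the entry above it; an active entry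
   a < b of another column, followed in T by some d > m+1, would give the forbidden
   pattern a < b < m+1 < d, so m+1 is placed below b as required. *)

From mathcomp Require Import all_boot all_order all_algebra.
From mathcomp Require Import zify.
(* Imported after MathComp, so that [col] is the column of a filling, not matrix's [col]. *)
Set Implicit Arguments. Unset Strict Implicit. Unset Printing Implicit Defensive.
Import Order.TTheory GRing.Theory Num.Theory.

Lemma sorted_ltn_rcons (s : seq nat) x :
  sorted ltn s -> {in s, forall y, y < x} -> sorted ltn (rcons s x).
Proof.
case: s => [|a s] //= Hs Hy.
by rewrite rcons_path Hs /=; apply: Hy; exact: mem_last.
Qed.

Lemma sorted_ltn_leq_last (s : seq nat) y : sorted ltn s -> y \in s -> y <= last 0 s.
Proof.
move=> Hs /(nthP 0) [i Hi <-].
have Hl : sorted leq s by apply: sub_sorted Hs => a b /ltnW.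
have Hne : 0 < size s by case: (s) Hi.
rewrite -nth_last; apply: (sorted_leq_nth leq_trans leqnn 0 Hl) => //=.
  by rewrite inE prednK.
by rewrite -ltnS prednK.
Qed.

Lemma sorted_ltn_head_leq (s : seq nat) y : sorted ltn s -> y \in s -> head 0 s <= y.
Proof.
move=> Hs /(nthP 0) [i Hi <-].
have Hl : sorted leq s by apply: sub_sorted Hs => a b /ltnW.
have Hne : 0 < size s by case: (s) Hi.
by rewrite -nth0; apply: (sorted_leq_nth leq_trans leqnn 0 Hl).
Qed.

Lemma sorted_ltn_nth_lt (s : seq nat) i j : sorted ltn s -> i < j -> j < size s ->
  nth 0 s i < nth 0 s j.
Proof.
move=> Hs Hij Hj; apply: (sorted_ltn_nth ltn_trans 0 Hs) => //.
by rewrite inE (ltn_trans Hij).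
Qed.

Section SortedPrefix.
Variable m : nat.

Lemma sorted_cons_count_leq0 (a : nat) s :
  sorted ltn (a :: s) -> m <= a -> count (fun x => x <= m) s = 0.
Proof.
move=> Hs Ha; rewrite -(count_pred0 s); apply: eq_in_count => y Hy /=.
have /allP /(_ y Hy) Hay := order_path_min ltn_trans Hs.
by apply/negbTE; rewrite -ltnNge (leq_ltn_trans Ha Hay).
Qed.

Lemma filter_leq_sorted (s : seq nat) : sorted ltn s ->
  [seq x <- s | x <= m] = take (count (fun x => x <= m) s) s.
Proof.
elim: s => [|x s IH] //= Hs.
case: (leqP x m) => Hx /=; first by rewrite IH ?(path_sorted Hs) // add1n.
have H0 := sorted_cons_count_leq0 Hs (ltnW Hx).
by rewrite H0 take0; apply/eqP; rewrite -size_eq0 size_filter H0.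
Qed.

Lemma sorted_nth_count_leq (s : seq nat) : sorted ltn s ->
  count (fun x => x <= m) s < size s -> m < nth 0 s (count (fun x => x <= m) s).
Proof.
elim: s => [|x s IH] //= Hs.
case: (leqP x m) => Hx /=; last by rewrite (sorted_cons_count_leq0 Hs (ltnW Hx)).
by rewrite add1n ltnS; exact: IH (path_sorted Hs).
Qed.

End SortedPrefix.

Lemma filter_leq_succ_notin (s : seq nat) m : m.+1 \notin s ->
  [seq x <- s | x <= m.+1] = [seq x <- s | x <= m].
Proof.
move=> Hn; apply: eq_in_filter => x Hx.
rewrite leq_eqVlt ltnS; case: eqP => // Ex.
by move: Hn; rewrite -Ex Hx.
Qed.

Lemma filter_leq_succ_sorted (s : seq nat) m : sorted ltn s -> m.+1 \in s ->
  [seq x <- s | x <= m.+1] = rcons [seq x <- s | x <= m] m.+1.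
Proof.
elim: s => [|x s IH] //= Hs; have Hs' := path_sorted Hs.
rewrite inE => /orP [/eqP Ex|Hin].
  subst x; rewrite leqnn ltnn /= !filter_leq_sorted //.
  by rewrite !(sorted_cons_count_leq0 Hs) ?take0 ?leqnn ?leqnSn.
have /allP /(_ _ Hin) Hx := order_path_min ltn_trans Hs.
by rewrite (ltnW Hx) -ltnS Hx /= IH.
Qed.

Lemma mem_flatten_nth (S : seq (seq nat)) j x : x \in nth [::] S j -> x \in flatten S.
Proof.
case: (ltnP j (size S)) => Hj; last by rewrite nth_default.
by move=> Hx; apply/flattenP; exists (nth [::] S j) => //; exact: mem_nth.
Qed.

Lemma uniq_flatten_nth_inj (S : seq (seq nat)) i j x :
  uniq (flatten S) -> x \in nth [::] S i -> x \in nth [::] S j -> i = j.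
Proof.
elim: S i j => [|s S IH] i j; first by rewrite nth_nil.
rewrite /= cat_uniq => /and3P [_ Hdis HS].
have Hout y : y \in s -> y \in flatten S -> False.
  by move=> Hy HyS; apply: (negP Hdis); apply/hasP; exists y.
case: i j => [|i] [|j] //= Hi Hj.
- by case: (Hout x) => //; exact: mem_flatten_nth Hj.
- by case: (Hout x) => //; exact: mem_flatten_nth Hi.
- by rewrite (IH i j).
Qed.

Definition push (S : seq (seq nat)) (j v : nat) : seq (seq nat) :=
  set_nth [::] S j (rcons (col S j) v).

Lemma col_push (S : seq (seq nat)) p v j :
  col (push S p v) j = if j == p then rcons (col S p) v else col S j.
Proof. by rewrite /col /push nth_set_nth. Qed.

Lemma size_push (S : seq (seq nat)) p v : p < size S -> size (push S p v) = size S.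
Proof. by move=> Hp; rewrite /push size_set_nth; apply/maxn_idPr. Qed.

Lemma mem_col_push (S : seq (seq nat)) p v j x :
  (x \in col (push S p v) j) = (x \in col S j) || ((j == p) && (x == v)).
Proof.
rewrite col_push; case: eqP => [->|] /=; last by rewrite orbF.
by rewrite mem_rcons inE orbC.
Qed.

Lemma perm_flatten_push (S : seq (seq nat)) p v : p < size S ->
  perm_eq (flatten (push S p v)) (v :: flatten S).
Proof.
rewrite /push /col; elim: S p => [|s S IH] [|p] //= Hp.
  by rewrite -cats1 -catA perm_catCA.
have := IH p Hp; rewrite -(perm_cat2l s) => /perm_trans; apply.
by rewrite perm_sym -cat1s perm_catCA.
Qed.

Lemma fill_from_ind k (P : nat -> seq (seq nat) -> Prop) w m S :
  P m S ->
  (forall t S', t < size w -> P (m + t) S' ->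
     P (m + t).+1 (step k (m + t).+1 (nth LW w t) S')) ->
  P (m + size w) (fill_from k m.+1 w S).
Proof.
elim: w m S => [|l w IH] m S HP Hs /=; first by rewrite addn0.
rewrite -addSnnS; apply: IH; first by have := Hs 0 S; rewrite addn0; apply.
by move=> t S' Ht; have := Hs t.+1 S'; rewrite -addSnnS; apply.
Qed.

Lemma foldl_argmin (f : nat -> nat) (js : seq nat) j0 :
  let r := foldl (fun b j => if f j < f b then j else b) j0 js in
  r \in j0 :: js /\ forall j, j \in j0 :: js -> f r <= f j.
Proof.
elim: js j0 => [|x js IH] j0 /=.
  by split=> [|j]; rewrite ?inE // => /eqP ->.
set j1 := if f x < f j0 then x else j0.
have [H1 H2] := IH j1.
have Hj1 : j1 = x \/ j1 = j0 by rewrite /j1; case: ifP; auto.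
have Hm0 : f j1 <= f j0 by rewrite /j1; case: ifP => // /ltnW.
have Hmx : f j1 <= f x by rewrite /j1; case: ifP => //; rewrite ltnNge => /negbFE.
split.
  by move: H1; rewrite !inE; case: Hj1 => ->; case/orP=> ->; rewrite ?orbT.
move=> j; rewrite !inE => /orP [/eqP ->|/orP [/eqP ->|Hj]].
- by apply: leq_trans Hm0; apply: H2; exact: mem_head.
- by apply: leq_trans Hmx; apply: H2; exact: mem_head.
- by apply: H2; rewrite inE Hj orbT.
Qed.

Lemma sum_take_succ (s : seq int) t : t < size s ->
  (\sum_(x <- take t.+1 s) x = \sum_(x <- take t s) x + nth 0 s t)%R.
Proof. by move=> Ht; rewrite (take_nth (0 : int)) // -cats1 big_cat big_seq1. Qed.

Lemma sum_pos_or_neg1 (s : seq int) :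
  all (fun x : int => (0 < x)%R || (x == -1)%R) s ->
  (\sum_(x <- s) x)%R =
  (Posz (sumn [seq `|x|%N | x <- [seq y <- s | (0 < y)%R]])
     - Posz (count (fun x : int => ~~ (0 < x)%R) s))%R.
Proof.
elim: s => [|x s IH] /=; first by rewrite big_nil.
move=> /andP [Hx Hs]; rewrite big_cons IH //.
case: (boolP (0 < x)%R) => Hp /=; first by rewrite -{1}(gez0_abs (ltW Hp)); lia.
by move: Hx; rewrite (negbTE Hp) /= => /eqP ->; lia.
Qed.

Lemma dyck_eq_from_signs (k : seq nat) (D1 D2 : seq int) :
  [seq x <- D1 | (0 < x)%R] = map Posz k -> [seq x <- D2 | (0 < x)%R] = map Posz k ->
  all (fun x : int => (0 < x)%R || (x == -1)%R) D1 ->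
  all (fun x : int => (0 < x)%R || (x == -1)%R) D2 ->
  map (fun x : int => (0 < x)%R) D1 = map (fun x : int => (0 < x)%R) D2 -> D1 = D2.
Proof.
elim: D1 k D2 => [|x D1 IH] k [|y D2] // F1 F2 V1 V2 Em.
move: V1 V2 Em => /= /andP [Vx V1] /andP [Vy V2] [Exy Em].
move: F1 F2; rewrite /= -Exy.
case: (boolP (0 < x)%R) => Hx.
  case: k => [|a k] //= [Ex F1] [Ey F2].
  by rewrite Ex Ey (IH k D2).
move: Vx Vy; rewrite -Exy (negbTE Hx) /= => /eqP -> /eqP -> F1 F2.
by rewrite (IH k D2).
Qed.

Section Filling.
Variable k : seq nat.
Local Notation n := (size k).
Local Notation N := (bigN k).
Hypothesis kn : 0 < n.

Definition rows_increase (S : seq (seq nat)) :=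
  forall i j r, i < j -> j < n -> r < size (col S i) -> r < size (col S j) ->
    nth 0 (col S i) r < nth 0 (col S j) r.

Definition avoids_pattern (S : seq (seq nat)) :=
  forall j r, r.+1 < size (col S j) ->
  forall j' b c, b \in col S j' -> c \in col S j' ->
    nth 0 (col S j) r < b -> b < c -> c < nth 0 (col S j) r.+1 -> False.

Definition no_pair_below_active (S : seq (seq nat)) :=
  forall j, j < n -> active k S j ->
  forall j' b c, b \in col S j' -> c \in col S j' ->
    bottom (col S j) < b -> b < c -> False.

Definition free_cells j (c : seq nat) := if c == [::] then 0 else (nth 0 k j).+1 - size c.

Definition free (S : seq (seq nat)) := \sum_(j < n) free_cells j (col S j).

Lemma free_push S p v : p < n ->
  free (push S p v) + free_cells p (col S p) = free S + free_cells p (rcons (col S p) v).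
Proof.
move=> Hp; rewrite /free (bigD1 (Ordinal Hp)) //= [in RHS](bigD1 (Ordinal Hp)) //=.
rewrite col_push eqxx (eq_bigr (fun j : 'I_n => free_cells j (col S j))); first lia.
move=> j Hj; rewrite col_push; case: eqP => // Ej; move: Hj.
have -> : j = Ordinal Hp by apply: val_inj.
by rewrite eqxx.
Qed.

Lemma free_push_nil S p v : p < n -> col S p = [::] ->
  free (push S p v) = free S + nth 0 k p.
Proof.
move=> Hp Hnil; have := free_push S v Hp.
by rewrite Hnil /free_cells /= subSS subn0 addn0.
Qed.

Lemma free_push_active S p v : p < n -> active k S p -> free (push S p v) + 1 = free S.
Proof.
move=> Hp /andP [Hne Hs]; have := free_push S v Hp.
rewrite /free_cells size_rcons; case: (col S p) Hne Hs => //= a c _ Hs; lia.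
Qed.

Lemma free_gt0_active S : 0 < free S -> exists2 j, j < n & active k S j.
Proof.
move=> Hpos; case: (boolP [exists j : 'I_n, 0 < free_cells j (col S j)]).
  move=> /existsP [j]; rewrite /free_cells; case: eqP => // Hne Hlt.
  exists j => //; apply/andP; split; first by case: (col S j) Hne.
  by move: Hlt; rewrite subn_gt0.
move=> /existsPn Hall; move: Hpos; rewrite /free big1 // => j _.
by move: (Hall j); case: (free_cells _ _).
Qed.

Lemma step_LS S i a c : size S = n -> c < n -> col S c = [::] ->
  (forall j, j < c -> col S j != [::]) -> step k i (LS a) S = push S c i.
Proof.
move=> Hs Hc Hnil Hne /=.
have Hhas : has (fun c0 : seq nat => c0 == [::]) S.
  by apply/(has_nthP [::]); exists c; rewrite ?Hs //; apply/eqP.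
set f := find _ S.
have -> : f = c.
  apply/eqP; rewrite eqn_leq; apply/andP; split; rewrite leqNgt; apply/negP.
  - by move=> /(before_find [::]); rewrite -/(col S c) Hnil eqxx.
  - by move=> Hfc; have := nth_find [::] Hhas; rewrite -/f -/(col S f) (negbTE (Hne f Hfc)).
by rewrite Hs Hc /push Hnil.
Qed.

Lemma step_LW S i : (exists2 j, j < n & active k S j) ->
  exists p, [/\ p < n, active k S p,
     (forall j, j < n -> active k S j -> bottom (col S p) <= bottom (col S j))
   & step k i LW S = push S p i].
Proof.
move=> [j Hj Ha].
case E: [seq j <- iota 0 n | active k S j] => [|j0 js].
  have : j \in [seq j <- iota 0 n | active k S j] by rewrite mem_filter Ha mem_iota.
  by rewrite E.
have [H1 H2] := foldl_argmin (fun j => bottom (col S j)) (j0 :: js) j0.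
have Hm x : (x \in j0 :: j0 :: js) = (x \in j0 :: js) by rewrite !inE orbA orbb.
set p := foldl _ j0 (j0 :: js) in H1 H2 *.
move: H1; rewrite Hm -E mem_filter mem_iota /= => /andP [Hap Hpn].
exists p; split => //; last by rewrite /step; cbv zeta; rewrite E.
by move=> j' Hj' Ha'; apply: H2; rewrite Hm -E mem_filter Ha' mem_iota.
Qed.

Lemma col_nseq_nil j : col (nseq n [::]) j = [::].
Proof. by rewrite /col nth_nseq; case: ifP. Qed.

Section DyckWord.
Variable D : seq int.
Hypothesis HD : is_dyck k D.
Local Notation Dn t := (nth (0 : int) D t).

Definition starts t := count (fun x : int => (0 < x)%R) (take t D).

Lemma dyck_size : size D = N. Proof. by case: HD. Qed.

Lemma dyck_down t : t < N -> ~~ (0 < Dn t)%R -> Dn t = (-1)%R.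
Proof.
case: HD => Hs _ /(all_nthP (0 : int)) Hall _ Ht.
by rewrite -Hs in Ht; case/orP: (Hall t Ht) => [->|/eqP].
Qed.

Lemma dyck_up t : t < N -> (0 < Dn t)%R -> starts t < n /\ Dn t = Posz (nth 0 k (starts t)).
Proof.
move=> Ht Hpos; case: HD => Hs Hf _ _.
have HDs : D = take t D ++ Dn t :: drop t.+1 D by rewrite -drop_nth ?cat_take_drop ?Hs.
rewrite HDs filter_cat /= Hpos in Hf.
have Hsz := congr1 size Hf; rewrite size_cat /= size_map size_filter in Hsz.
have Hc : starts t < n by rewrite /starts -Hsz; lia.
split => //; have := congr1 (fun s => nth 0%R s (starts t)) Hf => /=.
by rewrite nth_cat size_filter ltnn subnn /= => ->; rewrite (nth_map 0).
Qed.

Lemma starts_succ t : t < N -> starts t.+1 = starts t + (0 < Dn t)%R.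
Proof.
by move=> Ht; rewrite /starts (take_nth (0 : int)) ?dyck_size // -cats1 count_cat /= addn0.
Qed.

Lemma count_up_dyck : count (fun x : int => (0 < x)%R) D = n.
Proof. by case: HD => _ Hf _ _; rewrite -size_filter Hf size_map. Qed.

Lemma dyck_sum : (\sum_(x <- D) x = 0)%R.
Proof.
case: HD => Hs Hf Hall _; rewrite sum_pos_or_neg1 // Hf -map_comp map_id.
have := count_predC (fun x : int => (0 < x)%R) D.
rewrite count_up_dyck Hs /bigN => /addnI H.
by rewrite -[count _ D]/(count (predC (fun x : int => (0 < x)%R)) D) H subrr.
Qed.

Lemma dyck_psum_ge0 i : i <= N -> (0 <= \sum_(x <- take i D) x)%R.
Proof.
rewrite leq_eqVlt => /orP [/eqP ->|Hi]; first by rewrite -dyck_size take_size dyck_sum.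
by case: HD => _ _ _; apply.
Qed.

Lemma dyck_head_up : (0 < Dn 0)%R.
Proof.
have HN : 0 < N by rewrite /bigN addn_gt0 kn.
have := dyck_psum_ge0 HN.
rewrite (take_nth (0 : int)) ?dyck_size // take0 /= big_cons big_nil addr0.
by case: (boolP (0 < Dn 0)%R) => // /(dyck_down HN) ->.
Qed.

Record filling_inv (t : nat) (S : seq (seq nat)) : Prop := {
  inv_size : size S = n;
  inv_sorted : forall j, sorted ltn (col S j);
  inv_len : forall j, j < n -> size (col S j) <= (nth 0 k j).+1;
  inv_perm : perm_eq (flatten S) (iota 1 t);
  inv_started : forall j, j < n -> (col S j != [::]) = (j < starts t);
  inv_rows : rows_increase S;
  inv_pattern : avoids_pattern S;
  inv_active : no_pair_below_active S;
  inv_free : Posz (free S) = (\sum_(x <- take t D) x)%R;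
  inv_tops : forall x, 0 < x <= t ->
    [exists j : 'I_n, head 0 (col S j) == x] = (0 < Dn x.-1)%R }.

Lemma filling_inv_mem t S j x : filling_inv t S -> x \in col S j -> x < t.+1.
Proof.
move=> HI /mem_flatten_nth; rewrite (perm_mem (inv_perm HI)) mem_iota.
by rewrite add1n => /andP [].
Qed.

Variant placement (t : nat) (S : seq (seq nat)) (p : nat) : Prop :=
| PlaceS of col S p = [::] & p = starts t & (0 < Dn t)%R
| PlaceW of active k S p &
    (forall j, j < n -> active k S j -> bottom (col S p) <= bottom (col S j)) &
    ~~ (0 < Dn t)%R.

Section Push.
Variables (t : nat) (S : seq (seq nat)) (p : nat).
Hypotheses (Ht : t < N) (HI : filling_inv t S) (Hp : p < n) (Hplace : placement t S p).
Local Notation S' := (push S p t.+1).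

Lemma push_mem_old j x : x \in col S' j -> x < t.+1 -> x \in col S j.
Proof. by rewrite mem_col_push => /orP [//|/andP [_ /eqP ->]]; rewrite ltnn. Qed.

Lemma push_mem_le j x : x \in col S' j -> x <= t.+1.
Proof.
rewrite mem_col_push => /orP [/(filling_inv_mem HI) /ltnW //|/andP [_ /eqP ->]].
by [].
Qed.

Lemma placement_not_full : size (col S p) < (nth 0 k p).+1.
Proof. by case: Hplace => [-> _ _|/andP [_ H] _ _]. Qed.

Lemma placement_right_size j : p < j -> j < n -> size (col S j) <= size (col S p).
Proof.
move=> Hpj Hj; rewrite leqNgt; apply/negP => Hlong.
case: Hplace => [Hnil Ep _ | Hact _ _].
  have : col S j != [::] by rewrite -size_eq0 -lt0n; move: Hlong; rewrite Hnil.
  by rewrite (inv_started HI Hj) -Ep ltnNge (ltnW Hpj).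
set s := size (col S p) in Hlong.
have Hs : 0 < s by case/andP: (Hact).
have Hs1 : s.-1 < s by rewrite prednK.
apply: (inv_active HI Hp Hact (mem_nth 0 (ltn_trans Hs1 Hlong)) (mem_nth 0 Hlong)).
- by rewrite /bottom -nth_last; exact: (inv_rows HI Hpj Hj Hs1 (ltn_trans Hs1 Hlong)).
- exact: sorted_ltn_nth_lt (inv_sorted HI j) Hs1 Hlong.
Qed.

Lemma push_sorted j : sorted ltn (col S' j).
Proof.
rewrite col_push; case: eqP => _; last exact: (inv_sorted HI).
by apply: sorted_ltn_rcons; [exact: (inv_sorted HI) | move=> y; exact: filling_inv_mem].
Qed.

Lemma push_len j : j < n -> size (col S' j) <= (nth 0 k j).+1.
Proof.
move=> Hj; rewrite col_push; case: eqP => [->|_]; last exact: (inv_len HI).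
by rewrite size_rcons; exact: placement_not_full.
Qed.

Lemma push_perm : perm_eq (flatten S') (iota 1 t.+1).
Proof.
have Hps : p < size S by rewrite (inv_size HI).
apply: perm_trans (perm_flatten_push t.+1 Hps) _.
have -> : iota 1 t.+1 = iota 1 t ++ [:: t.+1] by rewrite -{1}[t.+1]addn1 iotaD add1n.
by rewrite perm_sym perm_catC /= perm_cons perm_sym (inv_perm HI).
Qed.

Lemma push_started j : j < n -> (col S' j != [::]) = (j < starts t.+1).
Proof.
move=> Hj; rewrite starts_succ // col_push.
case: Hplace => [Hnil Ep Hpos | Hact _ Hneg].
  rewrite Hpos addn1 ltnS leq_eqVlt -Ep; case: (eqVneq j p) => [->|Hne] /=.
    by case: (col S _).
  by rewrite (inv_started HI Hj) Ep.
rewrite (negbTE Hneg) addn0; case: (eqVneq j p) => [->|_]; last exact: (inv_started HI).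
by rewrite -(inv_started HI Hp); case/andP: Hact; case: (col S p).
Qed.

Lemma push_rows : rows_increase S'.
Proof.
move=> i j r Hij Hj; rewrite !col_push.
case: (eqVneq i p) => [Eip|Hip]; case: (eqVneq j p) => [Ejp|Hjp].
- by move: Hij; rewrite Eip Ejp ltnn.
- subst i; rewrite size_rcons nth_rcons => Hr Hrj.
  case: (ltnP r (size (col S p))) => Hr'; first exact: (inv_rows HI).
  by exfalso; have := placement_right_size Hij Hj; lia.
- subst j; rewrite size_rcons nth_rcons => Hri Hr.
  case: (ltnP r (size (col S p))) => Hr'; first exact: (inv_rows HI).
  case: eqP => [_|Hne]; first exact: filling_inv_mem HI (mem_nth 0 Hri).
  by exfalso; lia.
- exact: (inv_rows HI).
Qed.

Lemma push_pattern : avoids_pattern S'.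
Proof.
move=> j r Hr j' b c Hbm Hcm Hab Hbc Hcd.
have Hcv : c < t.+1 by apply: leq_trans Hcd (push_mem_le (mem_nth 0 Hr)).
have Hbo := push_mem_old Hbm (ltn_trans Hbc Hcv).
have Hco := push_mem_old Hcm Hcv.
move: Hr Hab Hcd; rewrite col_push.
case: (eqVneq j p) => [_|Hjp] Hr Hab Hcd; last exact: (inv_pattern HI Hr Hbo Hco Hab Hbc Hcd).
move: Hr Hab Hcd; rewrite size_rcons ltnS !nth_rcons leq_eqVlt.
case: (ltnP r.+1 (size (col S p))) => Hr1.
  by rewrite !orbT /= => _ Hab Hcd; exact: (inv_pattern HI Hr1 Hbo Hco Hab Hbc Hcd).
rewrite !orbF => /eqP Er1; rewrite -Er1 eqxx /= => Hab _.
case: Hplace => [Hnil _ _|Hact _ _]; first by move: Er1; rewrite Hnil.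
by apply: (inv_active HI Hp Hact Hbo Hco _ Hbc); rewrite /bottom -nth_last -Er1.
Qed.

Lemma push_active : no_pair_below_active S'.
Proof.
move=> j Hj Hact j' b c Hbm Hcm Hab Hbc.
rewrite /active col_push in Hact; rewrite col_push in Hab.
case: (eqVneq j p) Hact Hab => [_|Hjp] Hact Hab.
  by rewrite /bottom last_rcons in Hab; have := push_mem_le Hbm; rewrite leqNgt Hab.
have Hcv : c <= t.+1 := push_mem_le Hcm.
have Hbo := push_mem_old Hbm (leq_trans Hbc Hcv).
move: Hcm; rewrite mem_col_push => /orP [Hco|/andP [/eqP Ejp' /eqP Ecv]].
  exact: (inv_active HI Hj Hact Hbo Hco Hab Hbc).
case: Hplace => [Hnil _ _|_ Hmin _]; first by move: Hbo; rewrite Ejp' Hnil.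
have Hbp : b <= bottom (col S p) by apply: sorted_ltn_leq_last (inv_sorted HI p) _; rewrite -Ejp'.
by have := Hmin j Hj Hact; lia.
Qed.

Lemma push_free : Posz (free S') = (\sum_(x <- take t.+1 D) x)%R.
Proof.
rewrite sum_take_succ ?dyck_size //.
case: Hplace => [Hnil Ep Hpos|Hact _ Hneg].
  rewrite free_push_nil // PoszD (inv_free HI).
  by have [_ ->] := dyck_up Ht Hpos; rewrite -Ep.
by rewrite (dyck_down Ht Hneg) -(inv_free HI) -(free_push_active t.+1 Hp Hact); lia.
Qed.

Lemma push_tops x : 0 < x <= t.+1 ->
  [exists j : 'I_n, head 0 (col S' j) == x] = (0 < Dn x.-1)%R.
Proof.
move=> /andP [Hx0 Hxv].
have Hhead j : head 0 (col S' j) =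
    if (j == p) && (col S p == [::]) then t.+1 else head 0 (col S j).
  by rewrite col_push; case: eqP => [->|_] //=; case: (col S p).
case: (eqVneq x t.+1) => [->|Hxt] /=.
  case: Hplace => [Hnil _ Hpos|Hact _ Hneg].
    by rewrite Hpos; apply/existsP; exists (Ordinal Hp); rewrite Hhead eqxx Hnil.
  rewrite (negbTE Hneg); apply/negbTE/existsPn => j; rewrite Hhead.
  have -> : (col S p == [::]) = false by case/andP: Hact; case: (col S p).
  rewrite andbF; case E: (col S j) => [|a c] //=.
  have /(filling_inv_mem HI) : a \in col S j by rewrite E mem_head.
  by rewrite ltn_neqAle => /andP [].
rewrite -(inv_tops HI); last by rewrite Hx0 -ltnS ltn_neqAle Hxt Hxv.
apply: eq_existsb => j; rewrite Hhead.
case: ifP => // /andP [/eqP -> /eqP ->] /=.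
by rewrite eq_sym (negbTE Hxt); case: x Hx0 {Hxv Hxt}.
Qed.

Lemma filling_inv_push : filling_inv t.+1 S'.
Proof.
constructor.
- by rewrite size_push ?(inv_size HI).
- exact: push_sorted.
- exact: push_len.
- exact: push_perm.
- exact: push_started.
- exact: push_rows.
- exact: push_pattern.
- exact: push_active.
- exact: push_free.
- exact: push_tops.
Qed.

End Push.

Lemma filling_inv_step t S : t < N -> filling_inv t S ->
  filling_inv t.+1 (step k t.+1 (nth LW (SW D) t) S).
Proof.
move=> Ht HI; rewrite /SW (nth_map (0 : int)) ?dyck_size //.
case: (boolP (0 < Dn t)%R) => Hpos.
  have [Hc _] := dyck_up Ht Hpos.
  have Hnil : col S (starts t) = [::].
    by apply/eqP; apply: negbFE; rewrite (inv_started HI Hc) ltnn.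
  rewrite (step_LS _ _ (inv_size HI) Hc Hnil); first exact: filling_inv_push (PlaceS _ _ _).
  by move=> j Hj; rewrite (inv_started HI (ltn_trans Hj Hc)) Hj.
have Hfree : 0 < free S.
  have := dyck_psum_ge0 Ht.
  by rewrite sum_take_succ ?dyck_size // -(inv_free HI) (dyck_down Ht Hpos); lia.
have [p [Hp Hact Hmin ->]] := step_LW t.+1 (free_gt0_active Hfree).
exact: filling_inv_push (PlaceW _ _ _).
Qed.

Lemma filling_inv0 : filling_inv 0 (nseq n [::]).
Proof.
constructor => //; rewrite ?size_nseq //.
- by move=> j; rewrite col_nseq_nil.
- by move=> j _; rewrite col_nseq_nil.
- by elim: (n).
- by move=> j _; rewrite col_nseq_nil /starts take0.
- by move=> i j r _ _; rewrite col_nseq_nil.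
- by move=> j r; rewrite col_nseq_nil.
- by move=> j _; rewrite /active col_nseq_nil.
- by rewrite /free big1 ?take0 ?big_nil // => j _; rewrite col_nseq_nil.
- by case.
Qed.

Lemma fillT_fill_from : fillT k D = fill_from k 1 (SW D) (nseq n [::]).
Proof.
have := dyck_head_up; rewrite /fillT /SW.
case: D => [|d D'] /=; first by rewrite ltxx.
move=> ->; congr fill_from.
by rewrite (step_LS _ _ (size_nseq _ _) kn) ?col_nseq_nil // /push col_nseq_nil.
Qed.

Lemma filling_inv_fillT : filling_inv N (fillT k D).
Proof.
rewrite fillT_fill_from.
have := @fill_from_ind k filling_inv (SW D) 0 (nseq n [::]) filling_inv0.
rewrite add0n size_map dyck_size; apply=> t S; rewrite add0n; exact: filling_inv_step.
Qed.

Lemma filling_inv_is_tab S : filling_inv N S -> is_tab k S.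
Proof.
move=> HI.
have Hfree0 : free S = 0.
  by have := inv_free HI; rewrite -dyck_size take_size dyck_sum; case.
have Hstarts : starts N = n by rewrite /starts -dyck_size take_size count_up_dyck.
split; first exact: (inv_size HI).
- move=> j Hj.
  have Hne : col S j != [::] by rewrite (inv_started HI Hj) Hstarts.
  have : free_cells j (col S j) == 0.
    by move: Hfree0; rewrite /free (bigD1 (Ordinal Hj)) //= => /eqP; rewrite addn_eq0 => /andP [].
  rewrite /free_cells (negbTE Hne) subn_eq0 => H.
  by apply/eqP; rewrite eqn_leq H (inv_len HI Hj).
- exact: (inv_perm HI).
- split; [move=> j _; exact: (inv_sorted HI) | exact: (inv_rows HI) |].
  move=> j r Hj Hr j' r1 r2 Hj' Hr1 Hr2 [H1 H2 H3].
  exact: (inv_pattern HI Hr (mem_nth 0 Hr1) (mem_nth 0 Hr2) H1 H2 H3).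
Qed.

Lemma fillT_is_tab : is_tab k (fillT k D).
Proof. exact: filling_inv_is_tab filling_inv_fillT. Qed.

End DyckWord.

Lemma fillT_inj D1 D2 : is_dyck k D1 -> is_dyck k D2 -> fillT k D1 = fillT k D2 -> D1 = D2.
Proof.
move=> H1 H2 E.
have I1 := filling_inv_fillT H1; have I2 := filling_inv_fillT H2.
case: (H1) => S1 F1 V1 _; case: (H2) => S2 F2 V2 _.
apply: (dyck_eq_from_signs F1 F2 V1 V2).
apply: (@eq_from_nth _ false); first by rewrite !size_map S1 S2.
move=> i; rewrite size_map S1 => Hi.
rewrite !(nth_map (0 : int)) ?S1 ?S2 //.
have Hx : 0 < i.+1 <= N by [].
by rewrite -(inv_tops I1 Hx) -(inv_tops I2 Hx) E.
Qed.

Section Tableau.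
Hypothesis kpos : all (fun x => 0 < x) k.
Variable T : seq (seq nat).
Hypothesis HT : is_tab k T.

Lemma kpos_nth j : j < n -> 0 < nth 0 k j.
Proof. by move=> Hj; move/(all_nthP 0): kpos; apply. Qed.

Lemma tab_size : size T = n. Proof. by case: HT. Qed.

Lemma tab_col_size j : j < n -> size (col T j) = (nth 0 k j).+1.
Proof. by case: HT => _ H _ _; apply: H. Qed.

Lemma tab_col_out j : n <= j -> col T j = [::].
Proof. by move=> Hj; rewrite /col nth_default // tab_size. Qed.

Lemma tab_sorted j : sorted ltn (col T j).
Proof.
case: HT => _ _ _ [H _ _]; case: (ltnP j n) => Hj; first exact: H.
by rewrite tab_col_out.
Qed.

Lemma tab_rows : rows_increase T.
Proof. by case: HT => _ _ _ []. Qed.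

Lemma tab_pattern : avoids_pattern T.
Proof.
move=> j r Hr j' b c Hb Hc H1 H2 H3.
have Hj : j < n by case: (ltnP j n) => // Hj; move: Hr; rewrite tab_col_out.
have Hj' : j' < n by case: (ltnP j' n) => // Hj'; move: Hb; rewrite tab_col_out.
case/(nthP 0): Hb => r1 Hr1 E1; case/(nthP 0): Hc => r2 Hr2 E2.
case: HT => _ _ _ [_ _ H]; apply: (H j r Hj Hr j' r1 r2 Hj' Hr1 Hr2).
by rewrite E1 E2.
Qed.

Lemma tab_mem j x : x \in col T j -> 0 < x <= N.
Proof.
case: HT => _ _ Hperm _ /mem_flatten_nth.
by rewrite (perm_mem Hperm) mem_iota add1n ltnS.
Qed.

Lemma tab_col_inj j j' x : x \in col T j -> x \in col T j' -> j = j'.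
Proof.
by case: HT => _ _ Hperm _; apply: uniq_flatten_nth_inj; rewrite (perm_uniq Hperm) iota_uniq.
Qed.

Lemma tab_exists x : 0 < x <= N -> exists2 j, j < n & x \in col T j.
Proof.
case: HT => _ _ Hperm _ Hx.
have : x \in flatten T by rewrite (perm_mem Hperm) mem_iota add1n ltnS.
case/flattenP => s /(nthP [::]) [j Hj Ej] Hxs.
by exists j; [rewrite -tab_size | rewrite /col Ej].
Qed.

Lemma head_tab_mem j : j < n -> head 0 (col T j) \in col T j.
Proof. by move/tab_col_size; case: (col T j) => //= a s _; rewrite mem_head. Qed.

Definition trunc m := map (filter (fun x => x <= m)) T.

Lemma col_trunc m j : col (trunc m) j = [seq x <- col T j | x <= m].
Proof.
rewrite /col /trunc; case: (ltnP j (size T)) => Hj; first by rewrite (nth_map [::]).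
by rewrite !nth_default ?size_map.
Qed.

Lemma size_trunc m : size (trunc m) = n.
Proof. by rewrite size_map tab_size. Qed.

Lemma trunc_succ m j : j < n -> m.+1 \in col T j -> trunc m.+1 = push (trunc m) j m.+1.
Proof.
move=> Hj Hm; apply: (@eq_from_nth _ [::]); first by rewrite size_push ?size_trunc.
move=> i _; change (col (trunc m.+1) i = col (push (trunc m) j m.+1) i).
rewrite col_push !col_trunc; case: (eqVneq i j) => [->|Hij].
  exact: filter_leq_succ_sorted (tab_sorted j) Hm.
apply: filter_leq_succ_notin; apply/negP => Hin.
by move: Hij; rewrite (tab_col_inj Hin Hm) eqxx.
Qed.

Lemma trunc0 : trunc 0 = nseq n [::].
Proof.
apply: (@eq_from_nth _ [::]); first by rewrite size_trunc size_nseq.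
move=> i _; change (col (trunc 0) i = col (nseq n [::]) i).
rewrite col_nseq_nil col_trunc -(filter_pred0 (col T i)).
by apply: eq_in_filter => y /tab_mem; case: y.
Qed.

Lemma truncN : trunc N = T.
Proof.
rewrite /trunc map_id_in // => c /(nthP [::]) [j Hj Ej].
apply/all_filterP/allP => x Hx.
by have /tab_mem /andP [] : x \in col T j by rewrite /col Ej.
Qed.

Definition top_col x := find (fun c : seq nat => head 0 c == x) T.

Definition dyck_of_tab : seq int :=
  [seq if top_col x < n then Posz (nth 0 k (top_col x)) else (-1)%R | x <- iota 1 N].

Lemma size_dyck_of_tab : size dyck_of_tab = N.
Proof. by rewrite size_map size_iota. Qed.

Lemma top_col_head x j : j < n -> head 0 (col T j) = x -> top_col x = j.
Proof.
move=> Hj Hh.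
have Hhas : has (fun c : seq nat => head 0 c == x) T.
  by apply/(has_nthP [::]); exists j; rewrite ?tab_size // -/(col T j) Hh.
have Hlt : top_col x < n by rewrite -tab_size /top_col -has_find.
apply: (@tab_col_inj _ _ x); last by rewrite -Hh; exact: head_tab_mem.
by move: (head_tab_mem Hlt); rewrite /col /top_col (eqP (nth_find [::] Hhas)).
Qed.

Lemma nth_dyck_of_tab m : m < N -> nth (0 : int) dyck_of_tab m =
  if top_col m.+1 < n then Posz (nth 0 k (top_col m.+1)) else (-1)%R.
Proof. by move=> Hm; rewrite (nth_map 0) ?size_iota // nth_iota // add1n. Qed.

Lemma dyck_of_tab_top m j : m < N -> j < n -> head 0 (col T j) = m.+1 ->
  nth (0 : int) dyck_of_tab m = Posz (nth 0 k j).
Proof. by move=> Hm Hj Hh; rewrite nth_dyck_of_tab // (top_col_head Hj Hh) Hj. Qed.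

Lemma dyck_of_tab_nontop m j : m < N -> m.+1 \in col T j -> head 0 (col T j) != m.+1 ->
  nth (0 : int) dyck_of_tab m = (-1)%R.
Proof.
move=> Hm Hin Hh; rewrite nth_dyck_of_tab // -tab_size /top_col -has_find.
case: hasP => // [[c Hc /eqP Hh']].
case/(nthP [::]): Hc => j' Hj' Ec; rewrite tab_size in Hj'.
have Hhj' : head 0 (col T j') = m.+1 by rewrite /col Ec.
have Ej : j' = j by apply: tab_col_inj Hin; rewrite -Hhj'; exact: head_tab_mem.
by move: Hh; rewrite -Ej Hhj' eqxx.
Qed.

Lemma trunc_open m j : j < n -> head 0 (col T j) = m.+1 ->
  col (trunc m) j = [::] /\ forall j', j' < j -> col (trunc m) j' != [::].
Proof.
move=> Hj Hh; split.
  rewrite col_trunc -(filter_pred0 (col T j)); apply: eq_in_filter => y Hy /=.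
  by apply/negbTE; rewrite -ltnNge -Hh; exact: sorted_ltn_head_leq (tab_sorted j) Hy.
move=> j' Hj'; have Hj'n : j' < n := ltn_trans Hj' Hj.
have Hr : head 0 (col T j') < m.+1.
  by rewrite -Hh -!nth0; apply: tab_rows; rewrite ?tab_col_size.
rewrite col_trunc -size_eq0 size_filter -lt0n -has_count; apply/hasP.
by exists (head 0 (col T j')); [exact: head_tab_mem | rewrite -ltnS].
Qed.

Lemma trunc_active m j : j < n -> m.+1 \in col T j -> head 0 (col T j) != m.+1 ->
  active k (trunc m) j.
Proof.
move=> Hj Hin Hh.
have Hhm : head 0 (col T j) <= m.
  by have := sorted_ltn_head_leq (tab_sorted j) Hin; rewrite leq_eqVlt (negbTE Hh) ltnS.
rewrite /active col_trunc size_filter -(tab_col_size Hj); apply/andP; split.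
  by rewrite -has_count; apply/hasP; exists (head 0 (col T j)); first exact: head_tab_mem.
have : 0 < count (predC (fun x => x <= m)) (col T j).
  by rewrite -has_count; apply/hasP; exists m.+1 => //=; rewrite ltnn.
by have := count_predC (fun x => x <= m) (col T j); lia.
Qed.

Lemma trunc_min_active m j p : j < n -> m.+1 \in col T j -> active k (trunc m) j ->
  p < n -> active k (trunc m) p ->
  bottom (col (trunc m) p) <= bottom (col (trunc m) j) -> p = j.
Proof.
move=> Hj Hin Hactj Hp Hactp Hmin; apply/eqP; apply: contraT => Hpj.
set cp := col T p; set s := count (fun x => x <= m) cp.
have [Hs0 Hs] : 0 < s /\ s < size cp.
  by move: Hactp; rewrite /active col_trunc size_filter -(tab_col_size Hp) => /andP [].
have Hs1 : s.-1 < s by rewrite prednK.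
have Ha : bottom (col (trunc m) p) = nth 0 cp s.-1.
  rewrite col_trunc filter_leq_sorted ?tab_sorted // /bottom -nth_last.
  by rewrite size_take Hs nth_take.
have Hd : m < nth 0 cp s by apply: sorted_nth_count_leq; rewrite ?tab_sorted.
have Hdm : nth 0 cp s != m.+1.
  apply/eqP => E; move: Hpj; have : m.+1 \in cp by rewrite -E mem_nth.
  by move/tab_col_inj/(_ Hin) ->; rewrite eqxx.
set b := bottom (col (trunc m) j) in Hmin.
have : b \in col (trunc m) j.
  by case/andP: Hactj; rewrite /b; case: (col (trunc m) j) => //= b0 bs _ _; exact: mem_last.
rewrite col_trunc mem_filter => /andP [Hbm Hb].
have Hab : nth 0 cp s.-1 != b.
  apply/eqP => E; move: Hpj; have : b \in cp by rewrite -E mem_nth // (ltn_trans Hs1 Hs).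
  by move/tab_col_inj/(_ Hb) ->; rewrite eqxx.
exfalso; apply: (tab_pattern (_ : s.-1.+1 < size cp) Hb Hin).
- by rewrite prednK.
- by rewrite ltn_neqAle Hab -Ha.
- by rewrite ltnS.
- by rewrite prednK // ltn_neqAle eq_sym Hdm.
Qed.

Lemma trunc_step m : m < N ->
  step k m.+1 (nth LW (SW dyck_of_tab) m) (trunc m) = trunc m.+1.
Proof.
move=> Hm; have [j Hj Hin] := tab_exists (x := m.+1) Hm.
rewrite /SW (nth_map (0 : int)) ?size_dyck_of_tab // (trunc_succ Hj Hin).
case: (eqVneq (head 0 (col T j)) m.+1) => Hh.
  have [Hnil Hbefore] := trunc_open Hj Hh.
  rewrite (dyck_of_tab_top Hm Hj Hh) ltz_nat kpos_nth //.
  exact: step_LS (size_trunc m) Hj Hnil Hbefore.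
have Hact := trunc_active Hj Hin Hh.
have Hdown : (0 < (-1 : int))%R = false by [].
rewrite (dyck_of_tab_nontop Hm Hin Hh) Hdown.
have [p [Hp Hactp Hmin ->]] := step_LW m.+1 (ex_intro2 _ _ j Hj Hact).
by rewrite (trunc_min_active Hj Hin Hact Hp Hactp (Hmin j Hj Hact)).
Qed.

Lemma free_trunc m : m <= N ->
  Posz (free (trunc m)) = (\sum_(x <- take m dyck_of_tab) x)%R.
Proof.
elim: m => [|m IH] Hm.
  by rewrite take0 big_nil trunc0 /free big1 // => j _; rewrite col_nseq_nil.
rewrite sum_take_succ ?size_dyck_of_tab // -IH; last exact: ltnW.
have [j Hj Hin] := tab_exists (x := m.+1) Hm; rewrite (trunc_succ Hj Hin).
case: (eqVneq (head 0 (col T j)) m.+1) => Hh.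
  have [Hnil _] := trunc_open Hj Hh.
  by rewrite (dyck_of_tab_top Hm Hj Hh) free_push_nil // PoszD.
have := free_push_active m.+1 Hj (trunc_active Hj Hin Hh).
by rewrite (dyck_of_tab_nontop Hm Hin Hh); lia.
Qed.

Lemma column_tops :
  [seq x <- iota 1 N | top_col x < n] = [seq head 0 (col T j) | j <- iota 0 n].
Proof.
apply: (irr_sorted_eq ltn_trans ltnn).
- exact: sorted_filter ltn_trans _ _ (iota_ltn_sorted 1 N).
- rewrite sorted_map; apply: (@sub_in_sorted _ (fun j => j < n) ltn).
  + move=> i j Hi Hj Hij /=; rewrite -!nth0.
    by apply: tab_rows; rewrite ?tab_col_size.
  + by apply/allP => j; rewrite mem_iota.
  + exact: iota_ltn_sorted.
- move=> x; rewrite mem_filter mem_iota; apply/idP/mapP.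
  + move=> /andP [Htx Hx].
    have Hhas : has (fun c : seq nat => head 0 c == x) T by rewrite has_find tab_size.
    exists (top_col x); first by rewrite mem_iota.
    by have /eqP := nth_find [::] Hhas.
  + move=> [j]; rewrite mem_iota add0n /= => Hj ->.
    rewrite (top_col_head Hj erefl) Hj /= add1n ltnS.
    exact: tab_mem (head_tab_mem Hj).
Qed.

Lemma filter_up_dyck_of_tab : [seq x <- dyck_of_tab | (0 < x)%R] = map Posz k.
Proof.
rewrite filter_map (eq_filter (a2 := fun x => top_col x < n)); last first.
  by move=> x /=; case: ifP => // H; rewrite ltz_nat kpos_nth.
rewrite column_tops -map_comp -[in RHS](mkseq_nth 0 k) /mkseq -map_comp.
apply/eq_in_map => j; rewrite mem_iota add0n /= => Hj.
by rewrite (top_col_head Hj erefl) Hj.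
Qed.

Lemma dyck_of_tab_dyck : is_dyck k dyck_of_tab.
Proof.
split; [exact: size_dyck_of_tab | exact: filter_up_dyck_of_tab | |].
- by apply/allP => y /mapP [x _ ->]; case: ifP => // H; rewrite ltz_nat kpos_nth.
- by move=> i Hi; rewrite -free_trunc //; exact: ltnW.
Qed.

Lemma fillT_dyck_of_tab : fillT k dyck_of_tab = T.
Proof.
rewrite (fillT_fill_from dyck_of_tab_dyck).
have := @fill_from_ind k (fun m S => S = trunc m) (SW dyck_of_tab) 0 _ (esym trunc0).
rewrite add0n size_map size_dyck_of_tab truncN; apply=> t S; rewrite add0n => Ht ->.
exact: trunc_step.
Qed.

End Tableau.
End Filling.

Unset Implicit Arguments.

Theorem mainTheorem2 (k : seq nat) :
  0 < size k -> all (fun x => 0 < x) k ->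
  [/\ forall D, is_dyck k D -> is_tab k (fillT k D),
      forall D1 D2, is_dyck k D1 -> is_dyck k D2 ->
        fillT k D1 = fillT k D2 -> D1 = D2
    & forall T, is_tab k T -> exists2 D, is_dyck k D & fillT k D = T].
Proof.
move=> kn kpos; split.
- by move=> D; exact: fillT_is_tab.
- exact: fillT_inj.
- by move=> T HT; exists (dyck_of_tab k T); [exact: dyck_of_tab_dyck | exact: fillT_dyck_of_tab].
Qed.
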